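(* Let $\mathcal X,\mathcal Y$ be Polish spaces and $(\mu,\nu)\in\mathcal P(\mathcal X)\times\mathcal P(\mathcal Y)$. Let $\mathbf X$ be a one-time-step stochastic process $(X_1=X,X_2=Y)$ with filtration $(\mathcal F_t)_{t=1}^2$ on some probability space such that $X\sim\mu$ and $Y\sim\nu$. Then there exists $P^{\mathbf X}\in\Lambda(\mu,\nu)$ with \[ \mathbb E\big[F(X,\mathscr L(Y|\mathcal F_1))\big]=\int_{\mathcal X\times\mathcal P(\mathcal Y)}F(x,p)\,P^{\mathbf X}(dx,dp)\qquad(\ast) \] for all measurable $F:\mathcal X\times\mathcal P(\mathcal Y)\to\overline{\mathbb{R}}$ for which the left-hand side of $(\ast)$ is well-defined. Conversely, any $P\in\Lambda(\mu,\nu)$ induces such a process $\mathbf X$ with $X\sim\mu$ and $Y\sim\nu$ such that $(\ast)$ holds with $P^{\mathbf X}=P$ for any $F$ for which the right-hand side of $(\ast)$ is well-defined.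
   Context: $\overline{\mathbb{R}}=\mathbb{R}\cup\{\pm\infty\}$; $\mathscr L(Y|\mathcal F_1)$ is the conditional law (regular conditional distribution) of $Y$ given $\mathcal F_1$. $\mathcal P(\mathcal Y)$ carries the weak topology. The intensity map $\hat I:\mathcal P(\mathcal X\times\mathcal P(\mathcal Y))\to\mathcal P(\mathcal X\times\mathcal Y)$ is defined by $\hat I(P)(f)=\int\int f(x,y)\,p(dy)\,P(dx,dp)$ for bounded continuous $f$, and $\Lambda(\mu,\nu):=\{P\in\mathcal P(\mathcal X\times\mathcal P(\mathcal Y)):\hat I(P)\text{ has marginals }\mu,\nu\}$. *)

From HB Require Import structures.
From mathcomp Require Import all_boot all_order all_algebra.
From mathcomp Require Import all_classical all_reals all_analysis.
From mathcomp Require Import measurable_realfun.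

Set Implicit Arguments.
Unset Strict Implicit.
Unset Printing Implicit Defensive.

Import Order.TTheory GRing.Theory Num.Theory.
Local Open Scope classical_set_scope.
Local Open Scope ring_scope.

Section polish.
Context (R : realType) {d : measure_display} (T : measurableType d).

Definition dist_open (dist : T -> T -> R) (U : set T) : Prop :=
  forall x, U x -> exists2 e : R, 0 < e & [set y | dist x y < e] `<=` U.

Definition dist_cauchy (dist : T -> T -> R) (u : nat -> T) : Prop :=
  forall e : R, 0 < e -> exists N : nat,
    forall m n : nat, (N <= m)%N -> (N <= n)%N -> dist (u m) (u n) < e.

Definition dist_converges (dist : T -> T -> R) (u : nat -> T) (l : T) : Prop :=
  forall e : R, 0 < e -> exists N : nat,
    forall n : nat, (N <= n)%N -> dist (u n) l < e.

Definition is_metric (dist : T -> T -> R) : Prop :=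
  [/\ forall x y, 0 <= dist x y,
      forall x y, dist x y = 0 <-> x = y,
      forall x y, dist x y = dist y x &
      forall x y z, dist x z <= dist x y + dist y z].

Definition polish_borel : Prop :=
  exists dist : T -> T -> R,
    [/\ is_metric dist,
        forall u, dist_cauchy dist u -> exists l, dist_converges dist u l,
        exists s : nat -> T, forall x (e : R), 0 < e -> exists n, dist x (s n) < e &
        forall A : set T, measurable A <-> <<s dist_open dist >> A].
End polish.

Section prob_space.
Context {d : measure_display} (T : measurableType d) (R : realType).

Definition probs : Type := probability T R.

HB.instance Definition _ := gen_eqMixin probs.
HB.instance Definition _ := gen_choiceMixin probs.
HB.instance Definition _ :=
  isPointed.Build probs (@dirac _ T point R : probability T R).

Definition probs_measurable : set_system probs :=
  <<s \bigcup_(A in measurable)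
        preimage_set_system [set: probs] (fun p : probs => p A) measurable >>.

Let probs_measurable0 : probs_measurable set0.
Proof. exact: sigma_algebra0. Qed.
Let probs_measurableC (U : set probs) :
  probs_measurable U -> probs_measurable (~` U).
Proof. exact: sigma_algebraC. Qed.
Let probs_measurableU (F : (set probs)^nat) :
  (forall i, probs_measurable (F i)) -> probs_measurable (\bigcup_i F i).
Proof. exact: sigma_algebra_bigcup. Qed.

Definition probs_display : measure_display.
Proof. by constructor. Qed.

HB.instance Definition _ :=
  @isMeasurable.Build probs_display probs probs_measurable
    probs_measurable0 probs_measurableC probs_measurableU.
End prob_space.

Section processes.
Local Open Scope ereal_scope.
Context (R : realType) {dO : measure_display} (Omega : measurableType dO).

Definition F_measurable {dT} {T : measurableType dT} (F : set_system Omega)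
    (f : Omega -> T) : Prop :=
  forall B : set T, measurable B -> F (f @^-1` B).

Definition filtration2 (F1 F2 : set_system Omega) : Prop :=
  [/\ sigma_algebra [set: Omega] F1, sigma_algebra [set: Omega] F2,
      F1 `<=` F2 & F2 `<=` measurable].

Definition has_law {dT} {T : measurableType dT} (Pr : probability Omega R)
    (X : Omega -> T) (mu : probability T R) : Prop :=
  forall B : set T, measurable B -> Pr (X @^-1` B) = mu B.

(** [kappa] is (a version of) the regular conditional distribution
    L(Y | F1) of [Y] given [F1] under [Pr] *)
Definition cond_law {dY} {Y : measurableType dY} (Pr : probability Omega R)
    (F1 : set_system Omega) (Yv : Omega -> Y) (kappa : Omega -> probs Y R) : Prop :=
  F_measurable F1 kappa /\
  forall A : set Omega, F1 A -> forall B : set Y, measurable B ->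
    Pr (A `&` Yv @^-1` B) = \int[Pr]_(w in A) kappa w B.
End processes.

Definition integral_well_defined {d} {T : measurableType d} {R : realType}
    (m : {measure set T -> \bar R}) (f : T -> \bar R) : Prop :=
  ~ ((\int[m]_x (f^\+ x) = +oo)%E /\ (\int[m]_x (f^\- x) = +oo)%E).

Section intensity.
Local Open Scope ereal_scope.
Context (R : realType) {dX dY : measure_display}
  (X : measurableType dX) (Y : measurableType dY).

Definition intensity (P : probability (X * probs Y R)%type R)
    (C : set (X * Y)) : \bar R :=
  \int[P]_z \int[z.2]_y (\1_C (z.1, y))%:E.

Definition Lambda (mu : probability X R) (nu : probability Y R)
    (P : probability (X * probs Y R)%type R) : Prop :=
  (forall A : set X, measurable A -> intensity P (A `*` [set: Y]) = mu A) /\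
  (forall B : set Y, measurable B -> intensity P ([set: X] `*` B) = nu B).
End intensity.

(* For a process (X, Y) with a version kappa of L(Y | F_1), take for P^X the
   joint law of (X, kappa).  The first marginal of its intensity is the law mu
   of X; the second is B |-> E[kappa(B)] = Pr(Y in B) = nu(B), by the defining
   property of kappa on the whole space.  Two versions of L(Y | F_1) have the
   same integrals over every F_1-event, so they agree almost surely on each set
   of a countable family determining probabilities on the Polish space Y, hence
   agree as measures almost surely; a measurable F cannot tell apart measures
   agreeing on measurable sets, so the identity holds for every version.
   Conversely, for P in Lambda(mu, nu) put on (X * P(Y)) * Y the law
   P(dx, dp) p(dy), let F_1 be generated by the first coordinate (x, p) and
   take X := x, Y := y: then p itself is a version of L(Y | F_1), and the
   marginals of the intensity of P are exactly the laws of X and Y.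
   Integrals of extended-real functions are always defined (as the difference
   of the integrals of the positive and negative parts). *)

From HB Require Import structures.
From mathcomp Require Import all_boot all_order all_algebra.
From mathcomp Require Import all_classical all_reals all_analysis.
From mathcomp Require Import measurable_realfun.
From mathcomp Require Import lra.

Set Implicit Arguments.
Unset Strict Implicit.
Unset Printing Implicit Defensive.
Import Order.TTheory GRing.Theory Num.Theory.
Local Open Scope classical_set_scope.
Local Open Scope ring_scope.
Local Open Scope ereal_scope.

Section probs_agree.
Context (R : realType) {dY : measure_display} (Y : measurableType dY).

(* Measures are total functions on [set Y], so two elements of [probs Y R]
   may agree on all measurable sets and still be different records. *)
Definition probs_agree (p q : probs Y R) : Prop :=
  forall B, measurable B -> p B = q B.

Lemma measurable_probs_eval B : measurable B ->
  measurable_fun [set: probs Y R] (fun p => p B).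
Proof.
by move=> mB _ D mD; apply: sub_sigma_algebra; exists B => //; exists D.
Qed.

Lemma measurable_probs_agree (S : set (probs Y R)) p q :
  measurable S -> probs_agree p q -> S p -> S q.
Proof.
pose C := [set S : set (probs Y R) |
  forall p q, probs_agree p q -> (S p <-> S q)].
suff /(_ S) SC : measurable `<=` C by move=> /SC/(_ p q) + pq => /(_ pq)[].
apply: smallest_sub.
  split=> [p' q' //|A CA p' q' pq /=|A CA p' q' pq].
  - by have := CA p' q' pq; rewrite /setD /=; tauto.
  - by split=> -[n _ An]; exists n => //; have := CA n p' q' pq; tauto.
by move=> _ [B mB] [D mD <-] p' q' pq /=; rewrite (pq B mB).
Qed.

Lemma measurable_fun_probs_agree (f : probs Y R -> \bar R) p q :
  measurable_fun [set: probs Y R] f -> probs_agree p q -> f p = f q.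
Proof.
move=> mf pq; have mS := mf measurableT _ (emeasurable_set1 (f p)).
by have [_ ->] := measurable_probs_agree mS pq (conj I erefl).
Qed.

End probs_agree.

Section separable_metric.
Context (R : realType) {dY : measure_display} (Y : measurableType dY).
Variables (dist : Y -> Y -> R) (s : nat -> Y).
Hypothesis dist_metric : is_metric dist.
Hypothesis s_dense :
  forall x (e : R), (0 < e)%R -> exists n, (dist x (s n) < e)%R.
Hypothesis measurable_dist_open :
  forall A : set Y, measurable A <-> <<s dist_open dist >> A.

Definition dist_ball n k : set Y := [set y | (dist (s n) y < k.+1%:R^-1)%R].

Fixpoint dist_balls (l : seq (nat * nat)) : set Y :=
  if l is nk :: l' then dist_ball nk.1 nk.2 `&` dist_balls l' else setT.

Lemma dist_balls_cat l1 l2 :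
  dist_balls (l1 ++ l2) = dist_balls l1 `&` dist_balls l2.
Proof. by elim: l1 => [|nk l IH] /=; [rewrite setTI | rewrite IH setIA]. Qed.

Lemma dist_open_ball n k : dist_open dist (dist_ball n k).
Proof.
case: dist_metric => _ _ _ dtri; move=> x; rewrite /dist_ball /=.
set r := (k.+1%:R^-1)%R => bx.
exists (r - dist (s n) x)%R; first by rewrite subr_gt0.
by move=> y /= hy; have := dtri (s n) x y; lra.
Qed.

Lemma measurable_dist_balls l : measurable (dist_balls l).
Proof.
elim: l => [|[n k] l IH] //=; apply: measurableI => //.
by apply/measurable_dist_open; apply: sub_sigma_algebra; exact: dist_open_ball.
Qed.

Lemma dist_open_bigcup_balls U : dist_open dist U ->
  U = \bigcup_n \bigcup_k [set y | dist_ball n k y /\ dist_ball n k `<=` U].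
Proof.
case: dist_metric => _ _ dsym dtri oU.
apply/seteqP; split; last by move=> x [n _ [k _ [bx /(_ x bx)]]].
move=> x Ux; have [e e0 he] := oU x Ux.
have [k] : exists k, (0 + k.+1%:R^-1 < e / 2)%R.
  by apply: ltr_add_invr; rewrite divr_gt0.
rewrite add0r => hk.
have [n hn] := s_dense x (ltac:(by rewrite invr_gt0) : (0 < k.+1%:R^-1)%R).
exists n => //; exists k => //; split; first by rewrite /dist_ball /= dsym.
move=> y hy; apply: he => /=; have := dtri x (s n) y.
by rewrite /dist_ball /= in hy; move: hk hn hy; set r := (k.+1%:R^-1)%R; lra.
Qed.

Lemma measurable_generated_by_balls : measurable = <<s range dist_balls >>.
Proof.
apply/seteqP; split; last first.
  apply: smallest_sub; first exact: sigma_algebra_measurable.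
  by move=> _ [l _ <-]; exact: measurable_dist_balls.
move=> A /measurable_dist_open; apply: smallest_sub.
  exact: smallest_sigma_algebra.
move=> U /dist_open_bigcup_balls ->.
apply: sigma_algebra_bigcup => n; apply: sigma_algebra_bigcup => k.
have [nkU|nkU] := pselect (dist_ball n k `<=` U).
  rewrite (_ : [set y | _ /\ _] = dist_balls [:: (n, k)]).
    by apply: sub_sigma_algebra; exists [:: (n, k)].
  by apply/seteqP; split=> [y [] ? _|y [] ? _] //=; split.
rewrite (_ : [set y | _ /\ _] = set0); first exact: sigma_algebra0.
by apply/seteqP; split=> [y [] _ //|].
Qed.

Lemma probs_agree_dist_balls (p q : probs Y R) :
  (forall l, p (dist_balls l) = q (dist_balls l)) -> probs_agree p q.
Proof.
move=> pq B mB.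
apply: (measure_unique (range dist_balls) (fun _ => setT)) => //.
- exact: measurable_generated_by_balls.
- by move=> _ _ [l1 _ <-] [l2 _ <-]; exists (l1 ++ l2); rewrite ?dist_balls_cat.
- by move=> _; exists [::].
- by apply/seteqP; split => // y _; exists 0%N.
- by move=> _ [l _ <-]; exact: pq.
- by move=> _ /=; rewrite probability_setT ltry.
Qed.

End separable_metric.

Lemma polish_probs_separating (R : realType) {dY : measure_display}
    (Y : measurableType dY) :
  polish_borel R Y -> exists G : nat -> set Y,
    (forall n, measurable (G n)) /\
    forall p q : probs Y R, (forall n, p (G n) = q (G n)) -> probs_agree p q.
Proof.
case=> dist [dm _ [s ds] mE].
exists (fun i => dist_balls dist s (odflt [::] (unpickle i))).
split=> [i|p q pq]; first exact: measurable_dist_balls.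
apply: (probs_agree_dist_balls dm ds mE) => l.
by have := pq (pickle l); rewrite pickleK.
Qed.

Lemma probability_integrable01 {d} {T : measurableType d} {R : realType}
    (P : probability T R) A (f : T -> \bar R) :
  measurable A -> measurable_fun A f -> (forall x, 0 <= f x <= 1) ->
  P.-integrable A f.
Proof.
move=> mA mf f01; apply/integrableP; split => //.
apply: (@le_lt_trans _ _ (\int[P]_(x in A) (cst 1 x))).
  apply: ge0_le_integral => //; first exact: measurableT_comp.
  by move=> x _; have /andP[f0 f1] := f01 x; rewrite gee0_abs.
by rewrite integral_cst// mul1e (le_lt_trans (probability_le1 P mA)) ?ltry.
Qed.

Lemma integral_eq_lt_negligible {d} {T : measurableType d} {R : realType}
    (mu : {measure set T -> \bar R}) A (f g : T -> \bar R) :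
  measurable A -> mu.-integrable A f -> mu.-integrable A g ->
  (forall x, A x -> f x < g x) ->
  \int[mu]_(x in A) f x = \int[mu]_(x in A) g x -> mu.-negligible A.
Proof.
move=> mA if_ ig fg efg.
have mgf : measurable_fun A (g \- f).
  by apply: emeasurable_funB; [case/integrableP: ig|case/integrableP: if_].
have : \int[mu]_(x in A) `|(g \- f) x| = 0.
  transitivity (\int[mu]_(x in A) (g \- f) x).
    apply: eq_integral => x /[1!inE] Ax.
    by rewrite gee0_abs// ltW// sube_gt0 fg.
  by rewrite integralB// efg subee//; exact: integrable_fin_num.
move=> /(ae_eq_integral_abs mu mA mgf)[N [mN N0 AN]].
exists N; split => // x Ax; apply: AN => /= /(_ Ax) /eqP.
by rewrite gt_eqF// sube_gt0 fg.
Qed.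

Section cond_law_unique.
Context (R : realType) {dY dO : measure_display} (Y : measurableType dY)
  (Omega : measurableType dO) (Pr : probability Omega R).
Variable F1 : set_system Omega.
Hypotheses (sF1 : sigma_algebra [set: Omega] F1) (F1m : F1 `<=` measurable).
Variable Yv : Omega -> Y.

Lemma F_measurable_measurable {dT} {T : measurableType dT} (f : Omega -> T) :
  F_measurable F1 f -> measurable_fun [set: Omega] f.
Proof. by move=> mf _ B mB; rewrite setTI; exact/F1m/mf. Qed.

Lemma cond_law_ae_le (k1 k2 : Omega -> probs Y R) B :
  cond_law Pr F1 Yv k1 -> cond_law Pr F1 Yv k2 -> measurable B ->
  \forall w \ae Pr, k1 w B <= k2 w B.
Proof.
move=> [mk1 k1E] [mk2 k2E] mB.
pose A := [set w | k2 w B < k1 w B].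
have F1_eval (k : Omega -> probs Y R) : F_measurable F1 k ->
    measurable_fun [set: g_sigma_algebraType F1] (fun w => k w B).
  move=> mk _ D mD; apply: sub_sigma_algebra.
  exact: mk _ (measurable_probs_eval mB measurableT mD).
have F1A : F1 A.
  rewrite -(sigma_algebra_id sF1) -[A]setTI.
  exact: (@measurable_lte _ (g_sigma_algebraType F1) R setT measurableT
    _ _ (F1_eval _ mk2) (F1_eval _ mk1)).
have integrable_eval (k : Omega -> probs Y R) : F_measurable F1 k ->
    Pr.-integrable A (fun w => k w B).
  move=> mk; apply: probability_integrable01 => [||w]; first exact: F1m.
    apply/measurable_funTS/(measurableT_comp (measurable_probs_eval mB)).
    exact: F_measurable_measurable mk.
  by rewrite measure_ge0 (probability_le1 (k w : probability Y R) mB).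
have /(integral_eq_lt_negligible (mu := Pr) (F1m F1A)) : 
    \int[Pr]_(w in A) k2 w B = \int[Pr]_(w in A) k1 w B.
  by rewrite -k1E// -k2E.
move=> /(_ (integrable_eval _ mk2) (integrable_eval _ mk1) (fun _ h => h)).
by apply: negligibleS => w /= /negP; rewrite -ltNge.
Qed.

Lemma cond_law_ae_agree (k1 k2 : Omega -> probs Y R) :
  polish_borel R Y -> cond_law Pr F1 Yv k1 -> cond_law Pr F1 Yv k2 ->
  \forall w \ae Pr, probs_agree (k1 w) (k2 w).
Proof.
move=> /polish_probs_separating[G [mG sepG]] c1 c2.
have ae_eqG n : \forall w \ae Pr, k1 w (G n) = k2 w (G n).
  apply: filterS2 (cond_law_ae_le c1 c2 (mG n)) (cond_law_ae_le c2 c1 (mG n)).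
  by move=> w ? ?; apply/eqP; rewrite eq_le; apply/andP.
by apply: filterS (ae_foralln ae_eqG) => w; exact: sepG.
Qed.

Lemma integral_cond_law {dX} {X : measurableType dX} (Xv : Omega -> X)
    (k1 k2 : Omega -> probs Y R) (F : X * probs Y R -> \bar R) :
  polish_borel R Y -> measurable_fun [set: Omega] Xv ->
  cond_law Pr F1 Yv k1 -> cond_law Pr F1 Yv k2 ->
  measurable_fun [set: X * probs Y R] F ->
  \int[Pr]_w F (Xv w, k1 w) = \int[Pr]_w F (Xv w, k2 w).
Proof.
move=> hY mX c1 c2 mF.
have mF_cond (k : Omega -> probs Y R) : cond_law Pr F1 Yv k ->
    measurable_fun [set: Omega] (fun w => F (Xv w, k w)).
  move=> [mk _]; apply: measurableT_comp => //.
  by apply/measurable_fun_pairP; split => //; exact: F_measurable_measurable.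
apply: ae_eq_integral => //; [exact: mF_cond|exact: mF_cond|].
apply: filterS (cond_law_ae_agree hY c1 c2) => w agree _.
exact: measurable_fun_probs_agree (measurable_fun_pair2 (Xv w) mF) agree.
Qed.

End cond_law_unique.

Lemma integral_pushforwardT {d1 d2} (T1 : measurableType d1)
    (T2 : measurableType d2) (R : realType) (m : measure T1 R) (phi : T1 -> T2)
    (f : T2 -> \bar R) :
  measurable_fun [set: T1] phi -> measurable_fun [set: T2] f ->
  \int[pushforward m phi]_z f z = \int[m]_w f (phi w).
Proof.
move=> mphi mf; rewrite [LHS]integralE [RHS]integralE.
congr (_ - _); rewrite ge0_integral_pushforward ?preimage_setT//.
- by rewrite -funepos_comp.
- exact: measurable_funepos.
- by rewrite -funeneg_comp.
- exact: measurable_funeneg.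
Qed.

Section intensity_marginals.
Context (R : realType) {dX dY : measure_display}
  (X : measurableType dX) (Y : measurableType dY).
Variable P : probability (X * probs Y R)%type R.

Lemma intensityE C : measurable C ->
  intensity P C = \int[P]_z z.2 (xsection C z.1).
Proof.
move=> mC; apply: eq_integral => z _.
transitivity (\int[z.2]_y (\1_(xsection C z.1) y)%:E).
  apply: eq_integral => y _; congr (_%:R%:E); congr nat_of_bool.
  by apply/idP/idP => /set_mem h; apply/mem_set; apply/xsectionP.
by rewrite integral_indic ?setIT//; exact: measurable_xsection.
Qed.

Lemma intensityXT A : measurable A ->
  intensity P (A `*` [set: Y]) = P (A `*` [set: probs Y R]).
Proof.
move=> mA; rewrite intensityE; last exact: measurableX.
transitivity (\int[P]_z (\1_(A `*` [set: probs Y R]) z)%:E); last first.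
  by rewrite integral_indic ?setIT//; exact: measurableX.
apply: eq_integral => -[x p] _ /=; rewrite /indic in_setX in_setT andbT.
have [xA|xA] := boolP (x \in A).
  by rewrite in_xsectionX// probability_setT.
by rewrite notin_xsectionX// measure0.
Qed.

Lemma intensityTX B : measurable B ->
  intensity P ([set: X] `*` B) = \int[P]_z z.2 B.
Proof.
move=> mB; rewrite intensityE; last exact: measurableX.
by apply: eq_integral => z _; rewrite in_xsectionX// in_setT.
Qed.

End intensity_marginals.

Section joint_law.
Context (R : realType) {dX dY dO : measure_display} (X : measurableType dX)
  (Y : measurableType dY) (Omega : measurableType dO)
  (Pr : probability Omega R).
Variables (Xv : Omega -> X) (k : Omega -> probs Y R).
Hypotheses (mX : measurable_fun [set: Omega] Xv)
  (mk : measurable_fun [set: Omega] k).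

Let mXk : measurable_fun [set: Omega] (fun w => (Xv w, k w)).
Proof. exact/measurable_fun_pairP. Qed.

Definition joint_law : probability (X * probs Y R)%type R :=
  distribution Pr (HB.pack (fun w => (Xv w, k w))
                     (isMeasurableFun.Build _ _ _ _ _ mXk)).

Lemma integral_joint_law (F : X * probs Y R -> \bar R) :
  measurable_fun [set: X * probs Y R] F ->
  \int[joint_law]_z F z = \int[Pr]_w F (Xv w, k w).
Proof. exact: integral_pushforwardT. Qed.

Lemma Lambda_joint_law (mu : probability X R) (nu : probability Y R) :
  has_law Pr Xv mu ->
  (forall B, measurable B -> \int[Pr]_w k w B = nu B) ->
  Lambda mu nu joint_law.
Proof.
move=> lawX kE; split=> [A mA|B mB].
  rewrite intensityXT// /joint_law /distribution /pushforward -lawX//.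
  by congr (Pr _); apply/seteqP; split=> w //= [].
rewrite intensityTX// integral_joint_law ?kE//.
exact: measurableT_comp (measurable_probs_eval mB) measurable_snd.
Qed.

End joint_law.

Lemma integral_cond_law_eval (R : realType) {dY dO : measure_display}
    (Y : measurableType dY) (Omega : measurableType dO)
    (Pr : probability Omega R) (F1 : set_system Omega) (Yv : Omega -> Y)
    (k : Omega -> probs Y R) (nu : probability Y R) :
  sigma_algebra [set: Omega] F1 -> has_law Pr Yv nu -> cond_law Pr F1 Yv k ->
  forall B, measurable B -> \int[Pr]_w k w B = nu B.
Proof.
move=> /sigma_algebra_dynkin[F1T _ _] lawY [_ kE] B mB.
by rewrite -lawY// -[Yv @^-1` B]setTI kE.
Qed.

Section probability_kernel_product.
Context (R : realType) {d1 d2 : measure_display} (T1 : measurableType d1)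
  (T2 : measurableType d2).
Variables (P : probability T1 R) (k : R.-pker T1 ~> T2).

Definition prob_kprod (C : set (T1 * T2)) : \bar R :=
  \int[P]_z k z (xsection C z).

Let measurable_kernel_xsection C : measurable C ->
  measurable_fun [set: T1] (fun z => k z (xsection C z)).
Proof.
by move=> mC; apply: (measurable_fun_xsection_finite_kernel k); rewrite inE.
Qed.

Let prob_kprod0 : prob_kprod set0 = 0.
Proof.
by rewrite /prob_kprod (eq_integral (cst 0)) ?integral0// => z _;
  rewrite xsection0 measure0.
Qed.

Let prob_kprod_ge0 C : 0 <= prob_kprod C.
Proof. exact: integral_ge0. Qed.

Let prob_kprod_sigma_additive : semi_sigma_additive prob_kprod.
Proof.
move=> U mU tU mUU; rewrite [X in _ --> X](_ : _ =
  \int[P]_z (\sum_(n <oo) k z (xsection (U n) z))); last first.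
  apply: eq_integral => z _; rewrite /= xsection_bigcup.
  apply/esym/cvg_lim => //; apply: measure_semi_sigma_additive.
  - by move=> n; exact: measurable_xsection.
  - exact: trivIset_xsection.
  - by rewrite -xsection_bigcup; exact: measurable_xsection.
apply/cvg_closeP; split.
  by apply: is_cvg_nneseries => n _ _; exact: integral_ge0.
rewrite closeE// integral_nneseries// => n.
exact: measurable_kernel_xsection.
Qed.

HB.instance Definition _ := isMeasure.Build _ _ R prob_kprod
  prob_kprod0 prob_kprod_ge0 prob_kprod_sigma_additive.

Let prob_kprod_setT : prob_kprod [set: T1 * T2] = 1.
Proof.
rewrite /prob_kprod (eq_integral (cst 1)); last first.
  move=> z _; rewrite (_ : xsection _ _ = [set: T2]) ?prob_kernel//.
  by apply/seteqP; split => // y _; exact/xsectionP.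
by rewrite integral_cst// mul1e; exact: probability_setT.
Qed.

HB.instance Definition _ :=
  Measure_isProbability.Build _ _ R prob_kprod prob_kprod_setT.

Lemma prob_kprodX C D : measurable C -> measurable D ->
  prob_kprod (C `*` D) = \int[P]_(z in C) k z D.
Proof.
move=> mC mD; rewrite /prob_kprod [RHS]integral_mkcond.
apply: eq_integral => z _; rewrite patchE.
by case: ifPn => zC; [rewrite in_xsectionX|rewrite notin_xsectionX// measure0].
Qed.

Lemma prob_kprod_fst C : measurable C -> prob_kprod (fst @^-1` C) = P C.
Proof.
move=> mC; rewrite (_ : fst @^-1` C = C `*` [set: T2]); last first.
  by apply/seteqP; split => [[z y]|[z y] []].
rewrite prob_kprodX// (eq_integral (cst 1)) ?integral_cst ?mul1e ?setIT//.
by move=> z _; rewrite prob_kernel.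
Qed.

Lemma integral_prob_kprod_fst (G : T1 -> \bar R) : measurable_fun [set: T1] G ->
  \int[prob_kprod]_w G w.1 = \int[P]_z G z.
Proof.
move=> mG; rewrite -integral_pushforwardT//.
by apply: eq_measure_integral => A mA _; exact: prob_kprod_fst.
Qed.

End probability_kernel_product.

Section ksnd.
Context {R : realType} {dX dY : measure_display} {X : measurableType dX}
  {Y : measurableType dY}.

Definition ksnd (z : X * probs Y R) : {measure set Y -> \bar R} := z.2.

Lemma measurable_ksnd B : measurable B ->
  measurable_fun [set: X * probs Y R] (ksnd ^~ B).
Proof.
by move=> mB; exact: measurableT_comp (measurable_probs_eval mB) measurable_snd.
Qed.

HB.instance Definition _ := isKernel.Build _ _ _ _ R ksnd measurable_ksnd.

Lemma ksnd_setT z : ksnd z [set: Y] = 1.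
Proof. exact: probability_setT. Qed.

HB.instance Definition _ := Kernel_isProbability.Build _ _ _ _ R ksnd ksnd_setT.

End ksnd.

Section fst_events.
Context {d1 d2 : measure_display} {T1 : measurableType d1}
  {T2 : measurableType d2}.

Definition fst_events : set_system (T1 * T2) :=
  preimage_set_system [set: T1 * T2] fst measurable.

Lemma sigma_algebra_fst_events : sigma_algebra [set: T1 * T2] fst_events.
Proof. exact/sigma_algebra_preimage/sigma_algebra_measurable. Qed.

Lemma fst_events_measurable : fst_events `<=` measurable.
Proof. by move=> _ [C mC <-]; exact: measurable_fst. Qed.

Lemma filtration2_fst_events : filtration2 fst_events measurable.
Proof.
split=> //; [exact: sigma_algebra_fst_events|exact: sigma_algebra_measurable|].
exact: fst_events_measurable.
Qed.

Lemma F_measurable_fst_events {dT} {T : measurableType dT} (f : T1 -> T) :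
  measurable_fun [set: T1] f -> F_measurable fst_events (f \o fst).
Proof.
move=> mf B mB; exists (f @^-1` B); last by rewrite setTI.
by rewrite -[_ @^-1` B]setTI; exact: mf.
Qed.

End fst_events.

Section canonical_process.
Context (R : realType) {dX dY : measure_display} (X : measurableType dX)
  (Y : measurableType dY).
Variable P : probability (X * probs Y R)%type R.

Local Notation Omega := ((X * probs Y R) * Y)%type.
Local Notation Pr := (prob_kprod P ksnd).

Lemma cond_law_ksnd : cond_law Pr fst_events snd (fun w : Omega => w.1.2).
Proof.
split; first exact: (F_measurable_fst_events measurable_snd).
move=> _ [C mC <-] B mB.
rewrite setTI (_ : _ `&` _ = C `*` B); last first.
  by apply/seteqP; split => [[z y] []|[z y] []].
transitivity (\int[P]_(z in C) z.2 B); first exact: prob_kprodX.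
have mB_C : measurable_fun [set: X * probs Y R] ((fun z => z.2 B) \_ C).
  by apply/(measurable_restrictT _ mC)/measurable_funTS; exact: measurable_ksnd.
rewrite integral_mkcond [RHS]integral_mkcond.
rewrite -(integral_prob_kprod_fst P ksnd mB_C).
by apply: eq_integral => w _; rewrite !patchE.
Qed.

Lemma integral_cond_law_ksnd (k : Omega -> probs Y R) F :
  polish_borel R Y -> cond_law Pr fst_events snd k ->
  measurable_fun [set: X * probs Y R] F ->
  \int[Pr]_w F (w.1.1, k w) = \int[P]_z F z.
Proof.
move=> hY ck mF.
have mXv : measurable_fun [set: Omega] (fun w => w.1.1).
  exact: measurableT_comp measurable_fst measurable_fst.
rewrite (integral_cond_law sigma_algebra_fst_events fst_events_measurable hY
  mXv ck cond_law_ksnd mF) -(integral_prob_kprod_fst P ksnd mF).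
by apply: eq_integral => -[[x p] y].
Qed.

Lemma has_law_fst_fst (mu : probability X R) (nu : probability Y R) :
  Lambda mu nu P -> has_law Pr (fun w : Omega => w.1.1) mu.
Proof.
move=> [LX _] A mA; rewrite -LX// intensityXT//.
rewrite (_ : _ @^-1` A = fst @^-1` (A `*` [set: probs Y R])); last first.
  by apply/seteqP; split => [[[x p] y]|[[x p] y] []].
by apply: prob_kprod_fst; exact: measurableX.
Qed.

Lemma has_law_ksnd_snd (mu : probability X R) (nu : probability Y R) :
  Lambda mu nu P -> has_law Pr snd nu.
Proof.
move=> [_ LY] B mB; rewrite -LY// intensityTX//.
rewrite (_ : snd @^-1` B = [set: X * probs Y R] `*` B); last first.
  by apply/seteqP; split => [[z y]|[z y] []].
exact: prob_kprodX.
Qed.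

End canonical_process.

Theorem lemma3p2 (R : realType) (dX dY : measure_display)
  (X : measurableType dX) (Y : measurableType dY)
  (hX : polish_borel R X) (hY : polish_borel R Y)
  (mu : probability X R) (nu : probability Y R) :
  (forall (dO : measure_display) (Omega : measurableType dO)
      (Pr : probability Omega R) (F1 F2 : set_system Omega)
      (Xv : Omega -> X) (Yv : Omega -> Y),
    filtration2 F1 F2 -> F_measurable F1 Xv -> F_measurable F2 Yv ->
    has_law Pr Xv mu -> has_law Pr Yv nu ->
    exists P : probability (X * probs Y R)%type R,
      Lambda mu nu P /\
      forall kappa : Omega -> probs Y R, cond_law Pr F1 Yv kappa ->
      forall F : X * probs Y R -> \bar R, measurable_fun [set: X * probs Y R] F ->
        integral_well_defined Pr (fun w => F (Xv w, kappa w)) ->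
        \int[Pr]_w F (Xv w, kappa w) = \int[P]_z F z)
  /\
  (forall P : probability (X * probs Y R)%type R, Lambda mu nu P ->
    exists (dO : measure_display) (Omega : measurableType dO)
      (Pr : probability Omega R) (F1 F2 : set_system Omega)
      (Xv : Omega -> X) (Yv : Omega -> Y),
      [/\ filtration2 F1 F2, F_measurable F1 Xv /\ F_measurable F2 Yv,
          has_law Pr Xv mu, has_law Pr Yv nu &
          (forall kappa : Omega -> probs Y R, cond_law Pr F1 Yv kappa ->
          forall F : X * probs Y R -> \bar R, measurable_fun [set: X * probs Y R] F ->
            integral_well_defined P F ->
            \int[Pr]_w F (Xv w, kappa w) = \int[P]_z F z)]).
Proof.
split=> [dO Omega Pr F1 F2 Xv Yv [sF1 _ F12 F2m] mXv _ lawX lawY|P LP].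
  have F1m : F1 `<=` measurable by move=> A /F12 /F2m.
  have mX := F_measurable_measurable F1m mXv.
  have [[k0 ck0]|nok] := pselect (exists k, cond_law Pr F1 Yv k); last first.
    (* On a Polish [Y] this case does not occur, but any element of
       [Lambda mu nu] does here, so existence of conditional laws is avoided. *)
    exists (joint_law Pr mX (measurable_cst (nu : probs Y R))); split.
      apply: Lambda_joint_law => // B mB.
      by rewrite integral_cst// [X in _ * X]probability_setT mule1.
    by move=> k ck; exfalso; apply: nok; exists k.
  exists (joint_law Pr mX (F_measurable_measurable F1m ck0.1)); split.
    exact/Lambda_joint_law/(integral_cond_law_eval sF1 lawY ck0).
  move=> k ck F mF _.
  by rewrite (integral_cond_law sF1 F1m hY mX ck ck0 mF) integral_joint_law.
exists _, _, (prob_kprod P ksnd), fst_events, measurable, (fun w => w.1.1), snd.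
split; [exact: filtration2_fst_events| |exact: has_law_fst_fst LP|
        exact: has_law_ksnd_snd LP|].
  split; first exact: (F_measurable_fst_events measurable_fst).
  by move=> B mB; rewrite -[_ @^-1` B]setTI; exact: measurable_snd.
by move=> k ck F mF _; exact: integral_cond_law_ksnd.
Qed.
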